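(* Let $r\in\mathbb{Q}^\times$ and $f_r(t)=-r\sum_{k\ge1}(-1)^k\binom{1/r}{k}t^k$. (i) Let $p$ be a prime with $v_p(r)=0$, let $\phi_{r,p}\in C(\mathbb{Z}_p,\mathbb{C}_p)$ be the unique function with $\sum_{n\ge0}\phi_{r,p}(n)t^n/n!=\exp(f_r(t))$, and let $\Phi_{r,p}(s)=S^s(\phi_{r,p})(-1)$ for $s\in\mathbb{Z}_p$. Then $\Phi_{r,p}(s+\tfrac1r-1)=1+s\,\Phi_{r,p}(s-1)$ for all $s\in\mathbb{Z}_p$. (ii) Let $\Phi_{r,\infty}(\sigma)=\int_{-\infty}^0(1-x)^\sigma\exp\big(-r((1-x)^{1/r}-1)\big)dx$. Then $\Phi_{r,\infty}(s+\tfrac1r-1)=1+s\,\Phi_{r,\infty}(s-1)$ for all $s\in\mathbb{C}$ if $r>0$, and for all $s\in\mathbb{C}$ with $\mathrm{Re}\,s<0$ if $r<0$.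
   Context: $\mathbb{C}_p$ is the completion of an algebraic closure of $\mathbb{Q}_p$; $C(\mathbb{Z}_p,\mathbb{C}_p)$ the continuous functions $\mathbb{Z}_p\to\mathbb{C}_p$. For $x\in\mathbb{Z}_p$ (or any field element) $\binom xk=x(x-1)\cdots(x-k+1)/k!$. For $y\in\mathbb{Z}_p$ and $\phi\in C(\mathbb{Z}_p,\mathbb{C}_p)$, $S^y(\phi)(x)=\sum_{k\ge0}(-1)^kk!\binom yk\binom xk\phi(x-k)$. Since $v_p(r)=0$, $1/r\in\mathbb{Z}_p$ and $f_r\in\mathbb{Z}_p[[t]]$ with $f_r(0)=0$, $f_r'(0)=1$, so $\phi_{r,p}$ exists and is unique. For $x\le0$, $(1-x)^\sigma=\exp(\sigma\log(1-x))$ with the real logarithm; $\Phi_{r,\infty}(\sigma)$ converges for all $\sigma$ if $r>0$ and for $\mathrm{Re}\,\sigma<-1$ if $r<0$. *)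

From Stdlib Require Import Reals QArith Qreals ZArith Znumtheory.
From Coquelicot Require Import Coquelicot.

Definition zfact (k : nat) : Z := Z.of_nat (fact k).

Fixpoint zfalling (a : Z) (k : nat) : Z :=
  match k with
  | O => 1%Z
  | S k' => (zfalling a k' * (a - Z.of_nat k'))%Z
  end.

(* binomial coefficient binom(a,k) of an integer a (exact division) *)
Definition zbinom (a : Z) (k : nat) : Z := (zfalling a k / zfact k)%Z.

(* An element is represented by a sequence x : nat -> Z of integers   *)
(* with x (n+1) = x n mod p^n (isZp); x n is "x mod p^n".  Two        *)
(* representatives denote the same p-adic integer iff zp_eq.          *)

Definition padic := nat -> Z.

Definition isZp (p : Z) (x : padic) : Prop :=
  forall n : nat, (p ^ Z.of_nat n | x (S n) - x n)%Z.

Definition zp_eqm (p : Z) (n : nat) (x y : padic) : Prop :=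
  (p ^ Z.of_nat n | x n - y n)%Z.

Definition zp_eq (p : Z) (x y : padic) : Prop :=
  forall n : nat, zp_eqm p n x y.

Definition zp_const (c : Z) : padic := fun _ => c.
Definition zp_add (x y : padic) : padic := fun n => (x n + y n)%Z.
Definition zp_mul (x y : padic) : padic := fun n => (x n * y n)%Z.
Definition zp_opp (x : padic) : padic := fun n => (- x n)%Z.
Definition zp_sub (x y : padic) : padic := fun n => (x n - y n)%Z.

(* binom(y,k) for y in Z_p: the continuous extension of the integer
   binomial; mod p^n it is binom(y mod p^(n+k), k) (v_p(k!) < k). *)
Definition zp_binom (y : padic) (k : nat) : padic :=
  fun n => zbinom (y (n + k)%nat) k.

(* the rational q (assumed p-integral) viewed in Z_p:
   x is q in Z_p iff den(q) * x = num(q) in Z_p *)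
Definition zp_of_rat (p : Z) (x : padic) (q : Q) : Prop :=
  zp_eq p (zp_mul (zp_const (Zpos (Qden q))) x) (zp_const (Qnum q)).

(* continuous maps Z_p -> Z_p (on representatives; continuity forces
   compatibility with zp_eq) *)
Definition zp_continuous (p : Z) (phi : padic -> padic) : Prop :=
  forall x : padic, isZp p x ->
    isZp p (phi x) /\
    forall n : nat, exists m : nat, forall y : padic,
      isZp p y -> zp_eqm p m x y -> zp_eqm p n (phi x) (phi y).

Fixpoint zp_sum (t : nat -> padic) (N : nat) : padic :=
  match N with
  | O => zp_const 0
  | S N' => zp_add (zp_sum t N') (t N')
  end.

Definition zp_series_to (p : Z) (t : nat -> padic) (L : padic) : Prop :=
  isZp p L /\
  forall n : nat, exists K : nat, forall N : nat,
    (K <= N)%nat -> zp_eqm p n (zp_sum t N) L.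

(* k-th term of S^y(phi)(x) = sum_k (-1)^k k! binom(y,k) binom(x,k) phi(x-k) *)
Definition S_term (phi : padic -> padic) (y x : padic) (k : nat) : padic :=
  zp_mul (zp_const ((-1) ^ Z.of_nat k * zfact k)%Z)
    (zp_mul (zp_binom y k)
       (zp_mul (zp_binom x k) (phi (zp_sub x (zp_const (Z.of_nat k)))))).

Definition S_op_to (p : Z) (phi : padic -> padic) (y x L : padic) : Prop :=
  zp_series_to p (S_term phi y x) L.

Fixpoint qsum (f : nat -> Q) (N : nat) : Q :=
  match N with
  | O => 0%Q
  | S N' => (qsum f N' + f N')%Q
  end.

Definition qfact (k : nat) : Q := inject_Z (zfact k).

Fixpoint qfalling (x : Q) (k : nat) : Q :=
  match k with
  | O => 1%Q
  | S k' => (qfalling x k' * (x - inject_Z (Z.of_nat k')))%Q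
  end.

Definition qbinom (x : Q) (k : nat) : Q := (qfalling x k / qfact k)%Q.

Definition qsignpow (k : nat) : Q := inject_Z ((-1) ^ Z.of_nat k)%Z.

Definition fr_coef (r : Q) (k : nat) : Q :=
  match k with
  | O => 0%Q
  | S _ => (- r * qsignpow k * qbinom (/ r) k)%Q
  end.

Definition ps_mul (a b : nat -> Q) : nat -> Q :=
  fun n => qsum (fun i => a i * b (n - i)%nat)%Q (S n).

Fixpoint ps_pow (a : nat -> Q) (k : nat) : nat -> Q :=
  match k with
  | O => fun n => match n with O => 1%Q | S _ => 0%Q end
  | S k' => ps_mul (ps_pow a k') a
  end.

(* n-th coefficient of exp(f) = sum_k f^k / k!  for f with f(0) = 0
   (only k <= n contribute to the coefficient of t^n) *)
Definition ps_exp_coef (f : nat -> Q) (n : nat) : Q :=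
  qsum (fun k => ps_pow f k n / qfact k)%Q (S n).

Definition phi_coef (r : Q) (n : nat) : Q :=
  (qfact n * ps_exp_coef (fr_coef r) n)%Q.

Definition Cexp (z : C) : C :=
  (exp (Re z) * cos (Im z), exp (Re z) * sin (Im z))%R.

(* integrand of Phi_{r,infty}(sigma):
   (1-x)^sigma * exp(-r((1-x)^(1/r) - 1)),  (1-x)^sigma = exp(sigma log(1-x)) *)
Definition Phi_inf_integrand (r : R) (sigma : C) (x : R) : C :=
  Cmult (Cexp (Cmult sigma (RtoC (ln (1 - x)))))
        (RtoC (exp (- r * (Rpower (1 - x) (/ r) - 1)))).

Definition Phi_inf_is (r : R) (sigma : C) (l : C) : Prop :=
  is_RInt_gen (Phi_inf_integrand r sigma) (Rbar_locally m_infty) (at_point 0) l.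

(* (i) Write [psi j] for [phi(j)] modulo [p^n].  Comparing coefficients in
   [t (exp f_r)' = exp f_r * t f_r'] gives [phi(j+1) = S^(1/r-1)(phi)(j)] on the naturals.
   For integer orders the operators [S^a] on sequences form a semigroup and satisfy
   [S^a psi (X+1) = S^a (psi (. + 1)) (X) - a S^(a-1) psi (X)], so
   [S^(s+1/r-1) psi (X) = S^s psi (X+1) + s S^(s-1) psi (X)] once [s] and [1/r] are reduced
   modulo [p^n].  At [X = p^N - 1], which is [-1] modulo [p^N], these values agree modulo
   [p^n] with the partial sums of [S^y(phi)(-1)]: the series may be truncated where [p^n]
   divides [k!], and [phi(X-k)] is close to [phi(-1-k)] by continuity.  Finally
   [S^s psi (p^N) = psi (p^N) = phi(0) = 1] modulo [p^n].
   (ii) For the integrand [g_sigma(x) = (1-x)^sigma exp(-r((1-x)^(1/r)-1))] one has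
   [d/dx g_s = g_(s+1/r-1) - s g_(s-1)].  Integrate over [[a, 0]] and let
   [a -> -oo]: the boundary term at [a] vanishes and the integrals converge, because
   [|g_s(x)| <= C (1-x)^d] with [d < 0], under either hypothesis on [r] and [Re s]. *)

From Stdlib Require Import Reals QArith Qreals ZArith Znumtheory Zpow_facts Lia Lra List.
From Coquelicot Require Import Coquelicot.

Local Open Scope Z_scope.

(** * Binomial coefficients and the operators [S^a] on integer sequences *)

Fixpoint zsum (f : nat -> Z) (n : nat) : Z :=
  match n with O => 0 | S n' => zsum f n' + f n' end.

Lemma zsum_S f n : zsum f (S n) = zsum f n + f n.
Proof. reflexivity. Qed.

Lemma zsum_ext f g n : (forall i, (i < n)%nat -> f i = g i) -> zsum f n = zsum g n.
Proof.
  induction n as [|n IH]; intros H; simpl; auto.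
  rewrite IH, H; auto; intros; apply H; lia.
Qed.

Lemma zsum_plus f g n : zsum (fun i => f i + g i) n = zsum f n + zsum g n.
Proof. induction n; simpl; [|rewrite IHn]; ring. Qed.

Lemma zsum_sub f g n : zsum (fun i => f i - g i) n = zsum f n - zsum g n.
Proof. induction n; simpl; [|rewrite IHn]; ring. Qed.

Lemma zsum_scal c f n : zsum (fun i => c * f i) n = c * zsum f n.
Proof. induction n; simpl; [|rewrite IHn]; ring. Qed.

Lemma zsum_shift f n : zsum f (S n) = f 0%nat + zsum (fun i => f (S i)) n.
Proof. induction n; simpl in *; [|rewrite IHn]; ring. Qed.

Lemma zsum_split f a b : (a <= b)%nat ->
  zsum f b = zsum f a + zsum (fun i => f (a + i)%nat) (b - a).
Proof.
  induction 1 as [|m Hm IH]; [rewrite Nat.sub_diag; simpl; ring|].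
  replace (S m - a)%nat with (S (m - a)) by lia; simpl; rewrite IH.
  replace (a + (m - a))%nat with m by lia; ring.
Qed.

Lemma zsum_divide q f n : (forall i, (i < n)%nat -> (q | f i)) -> (q | zsum f n).
Proof.
  induction n; simpl; intros H; [apply Z.divide_0_r|].
  apply Z.divide_add_r; auto.
Qed.

Lemma cong_refl q a : (q | a - a).
Proof. rewrite Z.sub_diag; apply Z.divide_0_r. Qed.

Lemma cong_sym q a b : (q | a - b) -> (q | b - a).
Proof. intros H; replace (b - a) with (- (a - b)) by ring; now apply Z.divide_opp_r. Qed.

Lemma cong_trans q a b c : (q | a - b) -> (q | b - c) -> (q | a - c).
Proof. intros; replace (a - c) with ((a - b) + (b - c)) by ring; now apply Z.divide_add_r. Qed.

Lemma cong_add q a b c d : (q | a - b) -> (q | c - d) -> (q | (a + c) - (b + d)).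
Proof. intros; replace (a + c - (b + d)) with ((a - b) + (c - d)) by ring; now apply Z.divide_add_r. Qed.

Lemma cong_sub q a b c d : (q | a - b) -> (q | c - d) -> (q | (a - c) - (b - d)).
Proof. intros; replace (a - c - (b - d)) with ((a - b) - (c - d)) by ring; now apply Z.divide_sub_r. Qed.

Lemma cong_mul q a b c d : (q | a - b) -> (q | c - d) -> (q | a * c - b * d).
Proof.
  intros; replace (a * c - b * d) with ((a - b) * c + b * (c - d)) by ring.
  apply Z.divide_add_r; [apply Z.divide_mul_l | apply Z.divide_mul_r]; auto.
Qed.

Lemma cong_weaken q q' a b : (q' | q) -> (q | a - b) -> (q' | a - b).
Proof. apply Z.divide_trans. Qed.

Lemma zsum_cong q f g n : (forall i, (i < n)%nat -> (q | f i - g i)) -> (q | zsum f n - zsum g n).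
Proof.
  intros H; rewrite <- zsum_sub; apply zsum_divide, H.
Qed.

Lemma zfact_S k : zfact (S k) = (Z.of_nat k + 1) * zfact k.
Proof. unfold zfact; simpl fact; lia. Qed.

Lemma zfact_pos k : 0 < zfact k.
Proof. pose proof (lt_O_fact k); unfold zfact; lia. Qed.

Lemma zfalling_S a k : zfalling a (S k) = zfalling a k * (a - Z.of_nat k).
Proof. reflexivity. Qed.

Lemma zfalling_S_l a k : zfalling a (S k) = a * zfalling (a - 1) k.
Proof.
  revert a; induction k as [|k IH]; intros a; [cbn [zfalling Z.of_nat]; ring|].
  rewrite zfalling_S, IH, zfalling_S, Nat2Z.inj_succ; ring.
Qed.

Lemma zfalling_pascal a k :
  zfalling (a + 1) (S k) = zfalling a (S k) + (Z.of_nat k + 1) * zfalling a k.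
Proof. rewrite zfalling_S_l, Z.add_simpl_r, zfalling_S; ring. Qed.

Lemma zfalling_neg1 k : zfalling (-1) k = (-1) ^ Z.of_nat k * zfact k.
Proof.
  induction k as [|k IH]; [reflexivity|].
  rewrite zfalling_S, IH, zfact_S, Nat2Z.inj_succ, Z.pow_succ_r by lia; ring.
Qed.

Lemma zfalling_cong q a b k : (q | a - b) -> (q | zfalling a k - zfalling b k).
Proof.
  intros H; induction k; [apply cong_refl|].
  rewrite !zfalling_S; apply cong_mul, cong_sub; auto using cong_refl.
Qed.

Lemma zfalling_nat_large (X k : nat) : (X < k)%nat -> zfalling (Z.of_nat X) k = 0.
Proof.
  induction k as [|k IH]; intros H; [lia|].
  rewrite zfalling_S; destruct (Nat.eq_dec X k) as [->|]; [ring|].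
  rewrite IH by lia; ring.
Qed.

Lemma zfalling_zfact (j k : nat) : (k <= j)%nat -> zfalling (Z.of_nat j) k * zfact (j - k) = zfact j.
Proof.
  induction k as [|k IH]; intros H; [rewrite Nat.sub_0_r; cbn [zfalling]; ring|].
  replace (j - k)%nat with (S (j - S k)) in IH by lia.
  rewrite zfact_S in IH; rewrite zfalling_S, <- IH, Nat2Z.inj_sub, Nat2Z.inj_succ by lia; ring.
Qed.

Lemma zfact_divide_zfalling k a : (zfact k | zfalling a k).
Proof.
  revert a; induction k as [|k IH]; intros a; [apply Z.divide_refl|].
  assert (Hstep : forall b, (zfact (S k) | (Z.of_nat k + 1) * zfalling b k)).
  { intros b; rewrite zfact_S; apply Z.mul_divide_mono_l, IH. }
  induction a as [|a IHa|a IHa] using Z.peano_ind.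
  - rewrite zfalling_S_l, Z.mul_0_l; apply Z.divide_0_r.
  - rewrite <- Z.add_1_r, zfalling_pascal; apply Z.divide_add_r; auto.
  - assert (E := zfalling_pascal (Z.pred a) k); rewrite Z.add_1_r, Z.succ_pred in E.
    replace (zfalling (Z.pred a) (S k))
      with (zfalling a (S k) - (Z.of_nat k + 1) * zfalling (Z.pred a) k) by lia.
    apply Z.divide_sub_r; auto.
Qed.

Lemma zbinom_spec a k : zfact k * zbinom a k = zfalling a k.
Proof.
  unfold zbinom; destruct (zfact_divide_zfalling k a) as [q ->].
  rewrite Z.div_mul by (pose proof (zfact_pos k); lia); ring.
Qed.

Lemma zbinom_0 a : zbinom a 0 = 1.
Proof. reflexivity. Qed.

Lemma zbinom_neg1 k : zbinom (-1) k = (-1) ^ Z.of_nat k.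
Proof.
  unfold zbinom; rewrite zfalling_neg1, Z.div_mul; auto.
  pose proof (zfact_pos k); lia.
Qed.

Lemma zbinom_nat_large (X k : nat) : (X < k)%nat -> zbinom (Z.of_nat X) k = 0.
Proof. intros H; unfold zbinom; rewrite zfalling_nat_large; auto. Qed.

Lemma zbinom_pascal a k : zbinom (a + 1) (S k) = zbinom a (S k) + zbinom a k.
Proof.
  apply (Z.mul_reg_l _ _ (zfact (S k))); [pose proof (zfact_pos (S k)); lia|].
  rewrite Z.mul_add_distr_l, !zbinom_spec, zfalling_pascal, zfact_S, <- Z.mul_assoc, zbinom_spec.
  reflexivity.
Qed.

Lemma neg1_pow_sq k : (-1) ^ Z.of_nat k * (-1) ^ Z.of_nat k = 1.
Proof. rewrite <- Z.pow_mul_l; apply Z.pow_1_l; lia. Qed.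

Lemma pow_of_nat_S p n : p ^ Z.of_nat (S n) = p * p ^ Z.of_nat n.
Proof. rewrite Nat2Z.inj_succ, Z.pow_succ_r by lia; ring. Qed.

Lemma pow_divide_le p m n : (m <= n)%nat -> (p ^ Z.of_nat m | p ^ Z.of_nat n).
Proof.
  intros H; replace (Z.of_nat n) with (Z.of_nat m + Z.of_nat (n - m)) by lia.
  rewrite Z.pow_add_r by lia; apply Z.divide_factor_l.
Qed.

Lemma zfact_divide_le m k : (m <= k)%nat -> (zfact m | zfact k).
Proof.
  induction 1 as [|k _ IH]; [apply Z.divide_refl|].
  rewrite zfact_S; apply Z.divide_mul_r, IH.
Qed.

Lemma pow_divide_zfact p n k : 1 < p -> (Z.to_nat p * n <= k)%nat -> (p ^ Z.of_nat n | zfact k).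
Proof.
  intros Hp Hk; eapply Z.divide_trans; [|apply (zfact_divide_le _ _ Hk)]; clear k Hk.
  induction n as [|n IH]; [apply Z.divide_1_l|].
  destruct (Z.to_nat p) as [|q] eqn:Eq; [lia|].
  replace (S q * S n)%nat with (S (S q * n + q)) by lia.
  rewrite zfact_S, pow_of_nat_S; eapply Z.divide_trans.
  - apply Z.mul_divide_mono_l; eapply Z.divide_trans;
      [apply IH | apply (zfact_divide_le _ (S q * n + q)); lia].
  - apply Z.mul_divide_mono_r; exists (Z.of_nat (S n)); lia.
Qed.

(* The operator [S^a] of the paper for an integer order [a], on integer sequences and at a
   natural point [X]; its coefficient [(-1)^k k! binom(a,k) binom(X,k)] is written using
   [k! binom(a,k) = zfalling a k]. *)
Definition S_seq (a : Z) (psi : nat -> Z) (X : nat) : Z :=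
  zsum (fun k => (-1) ^ Z.of_nat k * zfalling a k * zbinom (Z.of_nat X) k * psi (X - k)%nat) (S X).

Lemma S_seq_0 a psi : S_seq a psi 0 = psi 0%nat.
Proof. unfold S_seq; cbn [zsum Z.of_nat zfalling]; rewrite zbinom_0, Z.pow_0_r, Nat.sub_0_r; ring. Qed.

Lemma S_seq_ext a psi1 psi2 X :
  (forall j, (j <= X)%nat -> psi1 j = psi2 j) -> S_seq a psi1 X = S_seq a psi2 X.
Proof. intros H; apply zsum_ext; intros i Hi; rewrite H by lia; reflexivity. Qed.

Lemma S_seq_sub_scal a psi1 psi2 c X :
  S_seq a (fun j => psi1 j - c * psi2 j) X = S_seq a psi1 X - c * S_seq a psi2 X.
Proof.
  unfold S_seq; rewrite <- zsum_scal, <- zsum_sub; apply zsum_ext; intros; ring.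
Qed.

Lemma S_seq_cong q a psi1 psi2 X :
  (forall j, (j <= X)%nat -> (q | psi1 j - psi2 j)) -> (q | S_seq a psi1 X - S_seq a psi2 X).
Proof. intros H; apply zsum_cong; intros i Hi; apply cong_mul; [apply cong_refl | apply H; lia]. Qed.

Lemma S_seq_succ a psi X :
  S_seq a psi (S X) = S_seq a (fun j => psi (S j)) X - a * S_seq (a - 1) psi X.
Proof.
  unfold S_seq; replace (Z.of_nat (S X)) with (Z.of_nat X + 1) by lia.
  set (u := fun k => (-1) ^ Z.of_nat k * zfalling a k * psi (S X - k)%nat).
  rewrite (zsum_ext _ (fun k => u k * zbinom (Z.of_nat X) k
                               + u k * match k with O => 0 | S k' => zbinom (Z.of_nat X) k' end)).
  2:{ intros [|k] _; unfold u; [rewrite !zbinom_0 | rewrite zbinom_pascal]; ring. }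
  rewrite zsum_plus, <- Z.add_opp_r, <- Z.mul_opp_l; f_equal.
  - rewrite zsum_S, zbinom_nat_large, Z.mul_0_r, Z.add_0_r by lia.
    apply zsum_ext; intros i Hi; unfold u.
    replace (S X - i)%nat with (S (X - i)) by lia; ring.
  - rewrite zsum_shift, Z.mul_0_r, Z.add_0_l, <- zsum_scal.
    apply zsum_ext; intros i _; unfold u.
    rewrite zfalling_S_l, pow_of_nat_S; simpl (S X - S i)%nat; ring.
Qed.

Lemma S_seq_add X : forall a b psi, S_seq a (S_seq b psi) X = S_seq (a + b) psi X.
Proof.
  induction X as [|X IH]; intros a b psi; [rewrite !S_seq_0; reflexivity|].
  rewrite S_seq_succ, (S_seq_ext a _ (fun j => S_seq b (fun i => psi (S i)) j - b * S_seq (b - 1) psi j))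
    by (intros; apply S_seq_succ).
  rewrite S_seq_sub_scal, !IH, S_seq_succ.
  replace (a + (b - 1)) with (a + b - 1) by ring; replace (a - 1 + b) with (a + b - 1) by ring; ring.
Qed.

Lemma S_seq_recurrence_cong q psi c s X :
  (forall j, (q | psi (S j) - S_seq c psi j)) ->
  (q | S_seq (s + c) psi X - (S_seq s psi (S X) + s * S_seq (s - 1) psi X)).
Proof.
  intros Hrec; rewrite <- S_seq_add, S_seq_succ.
  replace (S_seq s (S_seq c psi) X - (S_seq s (fun j => psi (S j)) X - s * S_seq (s - 1) psi X
                                       + s * S_seq (s - 1) psi X))
    with (S_seq s (S_seq c psi) X - S_seq s (fun j => psi (S j)) X) by ring.
  apply S_seq_cong; intros j _; apply cong_sym, Hrec.
Qed.

(* At [X = -1 (mod q)] the sum can be truncated where [q] starts dividing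
   [k!]: before that, [(-1)^k binom(X,k)] may be replaced by
   [(-1)^k binom(-1,k) = 1]. *)
Lemma S_seq_trunc q a psi X K :
  (forall k, (K <= k)%nat -> (q | zfact k)) -> (K <= X)%nat -> (q | Z.of_nat X + 1) ->
  (q | S_seq a psi X - zsum (fun k => zfalling a k * psi (X - k)%nat) K).
Proof.
  intros Hfact HKX HX; unfold S_seq; rewrite (zsum_split _ K (S X)) by lia.
  match goal with |- (_ | zsum ?g K + ?t - zsum ?h K) =>
    replace (zsum g K + t - zsum h K) with ((zsum g K - zsum h K) + t) by ring end.
  apply Z.divide_add_r.
  - apply zsum_cong; intros k Hk; rewrite <- (zbinom_spec a k).
    set (e := (-1) ^ Z.of_nat k).
    replace (zfact k * zbinom a k * psi (X - k)%nat)
      with (e * e * (zfact k * zbinom a k * psi (X - k)%nat)) by (unfold e; rewrite neg1_pow_sq; ring).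
    replace (e * (zfact k * zbinom a k) * zbinom (Z.of_nat X) k * psi (X - k)%nat
             - e * e * (zfact k * zbinom a k * psi (X - k)%nat))
      with (e * zbinom a k * psi (X - k)%nat * (zfact k * zbinom (Z.of_nat X) k - e * zfact k)) by ring.
    apply Z.divide_mul_r; unfold e; rewrite zbinom_spec, <- zfalling_neg1.
    apply zfalling_cong; replace (Z.of_nat X - -1) with (Z.of_nat X + 1) by ring; exact HX.
  - apply zsum_divide; intros i _; rewrite <- zbinom_spec.
    apply Z.divide_mul_l, Z.divide_mul_l, Z.divide_mul_r, Z.divide_mul_l, Hfact; lia.
Qed.

Lemma S_seq_multiple q a psi M : (q | Z.of_nat M) -> (q | S_seq a psi M - psi M).
Proof.
  intros HM; unfold S_seq; rewrite zsum_shift, Nat.sub_0_r, zbinom_0, Z.pow_0_r.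
  replace (1 * zfalling a 0 * 1 * psi M + _ - psi M) with
    (zsum (fun i => (-1) ^ Z.of_nat (S i) * zfalling a (S i) * zbinom (Z.of_nat M) (S i)
                    * psi (M - S i)%nat) M) by (cbn [zfalling]; ring).
  apply zsum_divide; intros i _; rewrite <- zbinom_spec.
  replace ((-1) ^ Z.of_nat (S i) * (zfact (S i) * zbinom a (S i)) * zbinom (Z.of_nat M) (S i)
           * psi (M - S i)%nat)
    with (zfact (S i) * zbinom (Z.of_nat M) (S i)
          * ((-1) ^ Z.of_nat (S i) * zbinom a (S i) * psi (M - S i)%nat)) by ring.
  apply Z.divide_mul_l; rewrite zbinom_spec, zfalling_S_l; apply Z.divide_mul_l, HM.
Qed.

(** * p-adic integers *)

Lemma isZp_cong_le p x m n : isZp p x -> (m <= n)%nat -> (p ^ Z.of_nat m | x n - x m).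
Proof.
  intros Hx; induction 1 as [|n Hmn IH]; [apply cong_refl|].
  apply cong_trans with (x n); [|exact IH].
  apply (cong_weaken (p ^ Z.of_nat n)); [apply pow_divide_le, Hmn | apply Hx].
Qed.

Lemma zp_eqm_le p m n x y :
  isZp p x -> isZp p y -> (m <= n)%nat -> zp_eqm p n x y -> zp_eqm p m x y.
Proof.
  unfold zp_eqm; intros Hx Hy Hmn H.
  replace (x m - y m) with ((x n - y n) - (x n - x m) + (y n - y m)) by ring.
  apply Z.divide_add_r; [apply Z.divide_sub_r|]; auto using isZp_cong_le.
  eapply cong_weaken; [apply pow_divide_le, Hmn | exact H].
Qed.

Lemma isZp_const p c : isZp p (zp_const c).
Proof. intros n; apply cong_refl. Qed.

Lemma isZp_add p x y : isZp p x -> isZp p y -> isZp p (zp_add x y).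
Proof. intros Hx Hy n; apply cong_add; auto. Qed.

Lemma isZp_sub p x y : isZp p x -> isZp p y -> isZp p (zp_sub x y).
Proof. intros Hx Hy n; apply cong_sub; auto. Qed.

Lemma isZp_mul p x y : isZp p x -> isZp p y -> isZp p (zp_mul x y).
Proof. intros Hx Hy n; apply cong_mul; auto. Qed.

Definition zp_falling (x : padic) (k : nat) : padic := fun n => zfalling (x n) k.

Lemma isZp_falling p x k : isZp p x -> isZp p (zp_falling x k).
Proof. intros Hx n; apply zfalling_cong, Hx. Qed.

Lemma zp_sum_at t N n : zp_sum t N n = zsum (fun k => t k n) N.
Proof. induction N; simpl; [|unfold zp_add; rewrite IHN]; reflexivity. Qed.

Lemma isZp_sum p t N : (forall k, (k < N)%nat -> isZp p (t k)) -> isZp p (zp_sum t N).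
Proof. induction N; intros H; [apply isZp_const | apply isZp_add; auto]. Qed.

Lemma zp_series_to_partial p t (Kf : nat -> nat) :
  (forall k, isZp p (t k)) ->
  (forall n k, (Kf n <= k)%nat -> (p ^ Z.of_nat n | t k n)) ->
  (forall n, (Kf n <= Kf (S n))%nat) ->
  zp_series_to p t (fun n => zp_sum t (Kf n) n).
Proof.
  intros Ht Hd Hm.
  assert (Htail : forall n N, (Kf n <= N)%nat ->
            (p ^ Z.of_nat n | zsum (fun k => t k n) N - zsum (fun k => t k n) (Kf n))).
  { intros n N HN; rewrite (zsum_split _ (Kf n) N) by exact HN.
    rewrite Z.add_simpl_l; apply zsum_divide; intros i _; apply Hd; lia. }
  split.
  - intros n; rewrite !zp_sum_at.
    apply cong_trans with (zsum (fun k => t k n) (Kf (S n))); [|apply Htail, Hm].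
    apply zsum_cong; intros i _; apply Ht.
  - intros n; exists (Kf n); intros N HN; unfold zp_eqm; rewrite !zp_sum_at; apply Htail, HN.
Qed.

Lemma pow_divide_mul_cancel p D V n : prime p -> ~ (p ^ Z.of_nat V | D) ->
  forall w, (p ^ Z.of_nat (n + V) | D * w) -> (p ^ Z.of_nat n | w).
Proof.
  intros Hp HV; pose proof (prime_ge_2 p Hp) as Hp2.
  induction n as [|n IH]; intros w H; [apply Z.divide_1_l|].
  destruct (IH w) as [w' ->].
  { eapply Z.divide_trans; [apply pow_divide_le | exact H]; lia. }
  destruct (Zdivide_dec p w') as [[u ->]|Hnd].
  - exists u; rewrite pow_of_nat_S; ring.
  - exfalso; apply HV.
    assert (H2 : (p ^ Z.of_nat (S V) | w' * D)).
    { replace (Z.of_nat (S n + V)) with (Z.of_nat n + Z.of_nat (S V)) in H by lia.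
      rewrite Z.pow_add_r in H by lia.
      replace (D * (w' * p ^ Z.of_nat n)) with (p ^ Z.of_nat n * (w' * D)) in H by ring.
      apply Z.mul_divide_cancel_l in H; [exact H | apply Z.pow_nonzero; lia]. }
    apply Gauss in H2.
    + eapply Z.divide_trans; [apply pow_divide_le | exact H2]; lia.
    + apply rel_prime_sym, rel_prime_Zpower_r; [lia|].
      apply rel_prime_sym, prime_rel_prime; assumption.
Qed.

Lemma zp_divide_mul_cancel p D z : prime p -> 0 < D -> isZp p z ->
  (forall n, (p ^ Z.of_nat n | D * z n)) -> forall n, (p ^ Z.of_nat n | z n).
Proof.
  intros Hp HD Hz H n; pose proof (prime_ge_2 p Hp).
  set (V := Z.to_nat D).
  assert (HV : ~ (p ^ Z.of_nat V | D)).
  { intros Hc; apply Z.divide_pos_le in Hc; [|exact HD].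
    unfold V in Hc; rewrite Z2Nat.id in Hc by lia.
    pose proof (Z.pow_gt_lin_r p D); lia. }
  replace (z n) with (z (n + V)%nat - (z (n + V)%nat - z n)) by ring.
  apply Z.divide_sub_r; [eapply pow_divide_mul_cancel; eauto | apply isZp_cong_le; auto; lia].
Qed.

Lemma zp_of_rat_ext p X Y q : (forall n, X n = Y n) -> zp_of_rat p X q -> zp_of_rat p Y q.
Proof. intros E H n; unfold zp_eqm, zp_mul, zp_const in *; rewrite <- E; apply H. Qed.

Lemma zp_of_rat_const p z : zp_of_rat p (zp_const z) (inject_Z z).
Proof. intros n; exists 0; unfold zp_mul, zp_const, inject_Z; cbn [Qnum Qden]; ring. Qed.

Lemma zp_of_rat_add p X Y q q' :
  zp_of_rat p X q -> zp_of_rat p Y q' -> zp_of_rat p (zp_add X Y) (q + q').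
Proof.
  destruct q as [a b], q' as [c d]; intros H1 H2 n; specialize (H1 n); specialize (H2 n).
  unfold zp_eqm, zp_mul, zp_const, zp_add in *; cbn [Qnum Qden Qplus Qmult Qopp Qminus] in *; rewrite Pos2Z.inj_mul.
  replace (Z.pos b * Z.pos d * (X n + Y n) - (a * Z.pos d + c * Z.pos b))
    with (Z.pos d * (Z.pos b * X n - a) + Z.pos b * (Z.pos d * Y n - c)) by ring.
  apply Z.divide_add_r; apply Z.divide_mul_r; auto.
Qed.

Lemma zp_of_rat_mul p X Y q q' :
  zp_of_rat p X q -> zp_of_rat p Y q' -> zp_of_rat p (zp_mul X Y) (q * q').
Proof.
  destruct q as [a b], q' as [c d]; intros H1 H2 n; specialize (H1 n); specialize (H2 n).
  unfold zp_eqm, zp_mul, zp_const in *; cbn [Qnum Qden Qplus Qmult Qopp Qminus] in *; rewrite Pos2Z.inj_mul.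
  replace (Z.pos b * Z.pos d * (X n * Y n) - a * c)
    with ((Z.pos b * X n - a) * (Z.pos d * Y n) + a * (Z.pos d * Y n - c)) by ring.
  apply Z.divide_add_r; [apply Z.divide_mul_l | apply Z.divide_mul_r]; auto.
Qed.

Lemma zp_of_rat_sub p X Y q q' :
  zp_of_rat p X q -> zp_of_rat p Y q' -> zp_of_rat p (zp_sub X Y) (q - q').
Proof.
  destruct q as [a b], q' as [c d]; intros H1 H2 n; specialize (H1 n); specialize (H2 n).
  unfold zp_eqm, zp_mul, zp_const, zp_sub in *; cbn [Qnum Qden Qplus Qmult Qopp Qminus] in *; rewrite Pos2Z.inj_mul.
  replace (Z.pos b * Z.pos d * (X n - Y n) - (a * Z.pos d + - c * Z.pos b))
    with (Z.pos d * (Z.pos b * X n - a) - Z.pos b * (Z.pos d * Y n - c)) by ring.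
  apply Z.divide_sub_r; apply Z.divide_mul_r; auto.
Qed.

Lemma zp_of_rat_falling p x q k : zp_of_rat p x q -> zp_of_rat p (zp_falling x k) (qfalling q k).
Proof.
  intros H; induction k as [|k IH]; [apply zp_of_rat_const|].
  apply zp_of_rat_ext with (zp_mul (zp_falling x k) (zp_sub x (zp_const (Z.of_nat k)))); [reflexivity|].
  apply zp_of_rat_mul, zp_of_rat_sub, zp_of_rat_const; assumption.
Qed.

Lemma zp_of_rat_sum p t qt N : (forall k, (k < N)%nat -> zp_of_rat p (t k) (qt k)) ->
  zp_of_rat p (zp_sum t N) (qsum qt N).
Proof. induction N; intros H; [apply zp_of_rat_const | apply zp_of_rat_add; auto]. Qed.

Lemma zp_of_rat_unique p X Y q q' : prime p -> isZp p X -> isZp p Y ->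
  zp_of_rat p X q -> zp_of_rat p Y q' -> (q == q')%Q -> zp_eq p X Y.
Proof.
  destruct q as [a b], q' as [c d]; intros Hp HX HY H1 H2 Hq n; unfold Qeq in Hq; cbn [Qnum Qden] in Hq.
  apply (zp_divide_mul_cancel p (Z.pos b * Z.pos d) (fun n => X n - Y n)); [exact Hp | lia | |].
  - apply isZp_sub; assumption.
  - intros m; specialize (H1 m); specialize (H2 m); unfold zp_eqm, zp_mul, zp_const in *; cbn [Qnum Qden] in *.
    replace (Z.pos b * Z.pos d * (X m - Y m))
      with (Z.pos d * (Z.pos b * X m - a) - Z.pos b * (Z.pos d * Y m - c) + (a * Z.pos d - c * Z.pos b))
      by ring.
    rewrite Hq, Z.sub_diag, Z.add_0_r; apply Z.divide_sub_r; apply Z.divide_mul_r; assumption.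
Qed.

Lemma zbinom_zfact (j k : nat) : (k <= j)%nat ->
  zfact k * zbinom (Z.of_nat j) k * zfact (j - k) = zfact j.
Proof. intros H; rewrite zbinom_spec; apply zfalling_zfact, H. Qed.

Local Close Scope Z_scope.

(** * The recurrence for the coefficients of [exp (f_r)] *)

Local Open Scope R_scope.

Fixpoint rsum (f : nat -> R) (n : nat) : R :=
  match n with O => 0 | S n' => rsum f n' + f n' end.

Lemma rsum_S f n : rsum f (S n) = rsum f n + f n.
Proof. reflexivity. Qed.

Lemma rsum_ext f g n : (forall i, (i < n)%nat -> f i = g i) -> rsum f n = rsum g n.
Proof.
  induction n as [|n IH]; intros H; simpl; auto.
  rewrite IH, H; auto; intros; apply H; lia.
Qed.

Lemma rsum_plus f g n : rsum (fun i => f i + g i) n = rsum f n + rsum g n.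
Proof. induction n; simpl; [|rewrite IHn]; ring. Qed.

Lemma rsum_scal c f n : rsum (fun i => c * f i) n = c * rsum f n.
Proof. induction n; simpl; [|rewrite IHn]; ring. Qed.

Lemma rsum_scal_r c f n : rsum (fun i => f i * c) n = rsum f n * c.
Proof. induction n; simpl; [|rewrite IHn]; ring. Qed.

Lemma rsum_zero f n : (forall i, (i < n)%nat -> f i = 0) -> rsum f n = 0.
Proof.
  induction n as [|n IH]; intros H; [reflexivity|].
  rewrite rsum_S, IH, H; [ring | lia | intros; apply H; lia].
Qed.

Lemma rsum_shift f n : rsum f (S n) = f 0%nat + rsum (fun i => f (S i)) n.
Proof. induction n; simpl in *; [|rewrite IHn]; ring. Qed.

Lemma rsum_tail f m n : (m <= n)%nat -> (forall i, (m <= i < n)%nat -> f i = 0) -> rsum f n = rsum f m.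
Proof.
  induction 1 as [|n Hmn IH]; intros H; auto.
  rewrite rsum_S, IH, H; [ring | lia | intros; apply H; lia].
Qed.

Lemma rsum_swap g n m :
  rsum (fun i => rsum (fun k => g i k) m) n = rsum (fun k => rsum (fun i => g i k) n) m.
Proof.
  induction n; simpl; [rewrite rsum_zero; auto|].
  rewrite IHn, <- rsum_plus; reflexivity.
Qed.

Lemma rsum_rev f m : rsum (fun i => f (m - i)%nat) (S m) = rsum f (S m).
Proof.
  induction m as [|m IH]; [reflexivity|].
  rewrite rsum_shift, Nat.sub_0_r, (rsum_S f (S m)), <- IH.
  rewrite (rsum_ext _ (fun i => f (m - i)%nat)) by (intros; f_equal); ring.
Qed.

Lemma rsum_triangle g n :
  rsum (fun i => rsum (fun j => g i j) (S i)) (S n) =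
  rsum (fun j => rsum (fun i => g (j + i)%nat j) (S (n - j))) (S n).
Proof.
  induction n as [|n IH]; [reflexivity|].
  rewrite (rsum_S (fun j => rsum (fun i => g (j + i)%nat j) (S (S n - j))) (S n)).
  rewrite (rsum_S _ (S n)), IH, Nat.sub_diag; simpl (rsum _ 1).
  rewrite Nat.add_0_r, Rplus_0_l.
  rewrite (rsum_ext (fun j => rsum (fun i => g (j + i)%nat j) (S (S n - j)))
                    (fun j => rsum (fun i => g (j + i)%nat j) (S (n - j)) + g (S n) j)).
  - rewrite rsum_plus, (rsum_S (g (S n))); ring.
  - intros i Hi; replace (S (S n - i)) with (S (S (n - i))) by lia.
    rewrite rsum_S; do 2 f_equal; lia.
Qed.

Definition cauchy_prod (a b : nat -> R) (n : nat) : R :=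
  rsum (fun i => a i * b (n - i)%nat) (S n).

Definition ps_one (n : nat) : R := match n with O => 1 | S _ => 0 end.

Definition ps_euler (a : nat -> R) (n : nat) : R := INR n * a n.

Fixpoint ps_rpow (f : nat -> R) (k : nat) : nat -> R :=
  match k with O => ps_one | S k' => cauchy_prod (ps_rpow f k') f end.

Definition ps_rexp (f : nat -> R) (n : nat) : R :=
  rsum (fun k => ps_rpow f k n / INR (fact k)) (S n).

Lemma cauchy_prod_comm a b n : cauchy_prod a b n = cauchy_prod b a n.
Proof.
  unfold cauchy_prod; rewrite <- rsum_rev; apply rsum_ext; intros i Hi.
  replace (n - (n - i))%nat with i by lia; ring.
Qed.

Lemma cauchy_prod_assoc a b c n :
  cauchy_prod (cauchy_prod a b) c n = cauchy_prod a (cauchy_prod b c) n.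
Proof.
  unfold cauchy_prod.
  rewrite (rsum_ext _ (fun i => rsum (fun j => a j * b (i - j)%nat * c (n - i)%nat) (S i)))
    by (intros; rewrite <- rsum_scal_r; reflexivity).
  rewrite rsum_triangle; apply rsum_ext; intros j Hj; rewrite <- rsum_scal.
  apply rsum_ext; intros i Hi.
  replace (j + i - j)%nat with i by lia; replace (n - (j + i))%nat with (n - j - i)%nat by lia; ring.
Qed.

Lemma cauchy_prod_ext a a' b b' n :
  (forall m, a m = a' m) -> (forall m, b m = b' m) -> cauchy_prod a b n = cauchy_prod a' b' n.
Proof. intros Ha Hb; apply rsum_ext; intros; rewrite Ha, Hb; reflexivity. Qed.

Lemma cauchy_prod_scal_l c a b n : cauchy_prod (fun m => c * a m) b n = c * cauchy_prod a b n.
Proof. unfold cauchy_prod; rewrite <- rsum_scal; apply rsum_ext; intros; ring. Qed.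

Lemma cauchy_prod_one_l b n : cauchy_prod ps_one b n = b n.
Proof.
  unfold cauchy_prod; rewrite rsum_shift, rsum_zero, Nat.sub_0_r; simpl; [ring|].
  intros; simpl; ring.
Qed.

Lemma ps_euler_cauchy_prod a b n :
  ps_euler (cauchy_prod a b) n = cauchy_prod (ps_euler a) b n + cauchy_prod a (ps_euler b) n.
Proof.
  unfold ps_euler, cauchy_prod; rewrite <- rsum_plus, <- rsum_scal.
  apply rsum_ext; intros i Hi; rewrite minus_INR by lia; ring.
Qed.

Lemma ps_rpow_low f : f 0%nat = 0 -> forall k i, (i < k)%nat -> ps_rpow f k i = 0.
Proof.
  intros Hf; induction k as [|k IH]; intros i Hi; [lia|].
  apply rsum_zero; intros l Hl.
  destruct (Nat.lt_ge_cases l k); [rewrite IH by lia; ring|].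
  replace (i - l)%nat with 0%nat by lia; rewrite Hf; ring.
Qed.

Lemma ps_euler_rpow f k n :
  ps_euler (ps_rpow f (S k)) n = INR (S k) * cauchy_prod (ps_rpow f k) (ps_euler f) n.
Proof.
  revert n; induction k as [|k IH]; intros n.
  - simpl ps_rpow; unfold ps_euler; rewrite !cauchy_prod_one_l; simpl; ring.
  - change (ps_rpow f (S (S k))) with (cauchy_prod (ps_rpow f (S k)) f).
    rewrite ps_euler_cauchy_prod,
      (cauchy_prod_ext _ (fun m => INR (S k) * cauchy_prod (ps_rpow f k) (ps_euler f) m) f f) by auto.
    rewrite cauchy_prod_scal_l, cauchy_prod_assoc,
      (cauchy_prod_ext (ps_rpow f k) (ps_rpow f k) _ (cauchy_prod f (ps_euler f)))
      by (auto using cauchy_prod_comm).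
    rewrite <- cauchy_prod_assoc, (S_INR (S k)); simpl ps_rpow; ring.
Qed.

(* [t (exp f)' = (exp f) (t f')], the identity behind the recurrence. *)
Lemma ps_euler_rexp f n : f 0%nat = 0 -> INR n * ps_rexp f n = cauchy_prod (ps_rexp f) (ps_euler f) n.
Proof.
  intros Hf; unfold ps_rexp; rewrite <- rsum_scal, rsum_shift.
  replace (INR n * (ps_rpow f 0 n / INR (fact 0))) with 0 by (destruct n; simpl; field).
  rewrite (rsum_ext _ (fun k => cauchy_prod (ps_rpow f k) (ps_euler f) n / INR (fact k))).
  2:{ intros i Hi.
      replace (INR n * (ps_rpow f (S i) n / INR (fact (S i))))
        with (ps_euler (ps_rpow f (S i)) n / INR (fact (S i))) by (unfold ps_euler, Rdiv; ring).
      rewrite ps_euler_rpow, fact_simpl, mult_INR; field.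
      split; [apply INR_fact_neq_0 | apply not_0_INR; lia]. }
  unfold cauchy_prod at 2.
  rewrite (rsum_ext (fun i => rsum (fun k => ps_rpow f k i / INR (fact k)) (S i) * ps_euler f (n - i)%nat)
                    (fun i => rsum (fun k => ps_rpow f k i / INR (fact k) * ps_euler f (n - i)%nat) (S n))).
  2:{ intros i Hi; rewrite rsum_scal_r; f_equal; symmetry; apply rsum_tail; [lia|].
      intros k Hk; rewrite ps_rpow_low by (auto; lia); unfold Rdiv; ring. }
  rewrite rsum_swap, rsum_S.
  replace (rsum (fun i => ps_rpow f n i / INR (fact n) * ps_euler f (n - i)%nat) (S n)) with 0.
  2:{ symmetry; apply rsum_zero; intros i Hi; destruct (Nat.lt_ge_cases i n).
      - rewrite ps_rpow_low by auto; unfold Rdiv; ring.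
      - replace (n - i)%nat with 0%nat by lia; unfold ps_euler; simpl; ring. }
  rewrite Rplus_0_l, Rplus_0_r; apply rsum_ext; intros k Hk.
  unfold cauchy_prod, Rdiv; rewrite <- rsum_scal_r; apply rsum_ext; intros; ring.
Qed.

Fixpoint rfalling (x : R) (k : nat) : R :=
  match k with O => 1 | S k' => rfalling x k' * (x - INR k') end.

Lemma rfalling_S_l x k : rfalling x (S k) = x * rfalling (x - 1) k.
Proof.
  revert x; induction k as [|k IH]; intros x; [simpl; ring|].
  change (rfalling x (S (S k))) with (rfalling x (S k) * (x - INR (S k))).
  rewrite IH; simpl rfalling; rewrite S_INR; ring.
Qed.

Lemma Q2R_inject_Z z : Q2R (inject_Z z) = IZR z.
Proof. unfold Q2R; simpl; field. Qed.

Lemma Q2R_qsum f n : Q2R (qsum f n) = rsum (fun i => Q2R (f i)) n.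
Proof. induction n; simpl; [apply RMicromega.Q2R_0 | rewrite Q2R_plus, IHn; reflexivity]. Qed.

Lemma Q2R_qfact k : Q2R (qfact k) = INR (fact k).
Proof. unfold qfact, zfact; rewrite Q2R_inject_Z, INR_IZR_INZ; reflexivity. Qed.

Lemma qfact_neq_0 k : ~ (qfact k == 0)%Q.
Proof.
  intros H; apply Qeq_eqR in H; rewrite Q2R_qfact, RMicromega.Q2R_0 in H.
  exact (INR_fact_neq_0 k H).
Qed.

Lemma Q2R_qfalling q k : Q2R (qfalling q k) = rfalling (Q2R q) k.
Proof.
  induction k; simpl; [apply RMicromega.Q2R_1|].
  rewrite Q2R_mult, Q2R_minus, IHk, Q2R_inject_Z, INR_IZR_INZ; reflexivity.
Qed.

Lemma Q2R_ps_pow f k n : Q2R (ps_pow f k n) = ps_rpow (fun i => Q2R (f i)) k n.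
Proof.
  revert n; induction k as [|k IH]; intros n.
  - destruct n; simpl; [apply RMicromega.Q2R_1 | apply RMicromega.Q2R_0].
  - simpl; unfold ps_mul, cauchy_prod; rewrite Q2R_qsum.
    apply rsum_ext; intros i _; rewrite Q2R_mult, IH; reflexivity.
Qed.

Lemma Q2R_ps_exp_coef f n : Q2R (ps_exp_coef f n) = ps_rexp (fun i => Q2R (f i)) n.
Proof.
  unfold ps_exp_coef, ps_rexp; rewrite Q2R_qsum; apply rsum_ext; intros i _.
  rewrite Q2R_div by apply qfact_neq_0; rewrite Q2R_ps_pow, Q2R_qfact; reflexivity.
Qed.

Lemma Q2R_qsignpow k : Q2R (qsignpow k) = (-1) ^ k.
Proof. unfold qsignpow; rewrite Q2R_inject_Z, <- pow_IZR; reflexivity. Qed.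

Lemma Q2R_neq_0 r : ~ (r == 0)%Q -> Q2R r <> 0.
Proof. intros hr H; apply hr, eqR_Qeq; rewrite H, RMicromega.Q2R_0; reflexivity. Qed.

(* [t f_r'(t) = t (1-t)^(1/r - 1)]. *)
Lemma ps_euler_fr_coef r k : ~ (r == 0)%Q ->
  ps_euler (fun i => Q2R (fr_coef r i)) (S k) = (-1) ^ k * rfalling (/ Q2R r - 1) k / INR (fact k).
Proof.
  intros hr; pose proof (Q2R_neq_0 r hr); unfold ps_euler, fr_coef, qbinom.
  rewrite !Q2R_mult, Q2R_opp, Q2R_qsignpow, Q2R_div by apply qfact_neq_0.
  rewrite Q2R_qfalling, Q2R_qfact, Q2R_inv, rfalling_S_l, fact_simpl, mult_INR by exact hr.
  simpl pow; field; repeat split; [apply INR_fact_neq_0 | assumption | apply not_0_INR; lia].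
Qed.

Lemma phi_coef_succ r j : ~ (r == 0)%Q ->
  (phi_coef r (S j) ==
   qsum (fun k => inject_Z ((-1) ^ Z.of_nat k * zbinom (Z.of_nat j) k) * qfalling (/ r - 1) k
                  * phi_coef r (j - k)) (S j))%Q.
Proof.
  intros hr; apply eqR_Qeq; rewrite Q2R_qsum; unfold phi_coef.
  rewrite Q2R_mult, Q2R_qfact, Q2R_ps_exp_coef.
  set (F := fun i => Q2R (fr_coef r i)).
  assert (HF0 : F 0%nat = 0) by apply RMicromega.Q2R_0.
  rewrite fact_simpl, mult_INR, (Rmult_comm (INR (S j))), Rmult_assoc, (ps_euler_rexp F (S j) HF0).
  unfold cauchy_prod; rewrite rsum_S, Nat.sub_diag.
  replace (ps_euler F 0) with 0 by (unfold ps_euler; simpl; ring).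
  rewrite Rmult_0_r, Rplus_0_r, <- rsum_rev, <- rsum_scal; apply rsum_ext; intros k Hk.
  replace (S j - (j - k))%nat with (S k) by lia; unfold F; rewrite ps_euler_fr_coef by exact hr.
  rewrite !Q2R_mult, Q2R_inject_Z, Q2R_qfalling, Q2R_qfact, Q2R_ps_exp_coef, Q2R_minus, Q2R_inv,
    RMicromega.Q2R_1 by exact hr.
  pose proof (zbinom_zfact j k ltac:(lia)) as Hc; apply (f_equal IZR) in Hc.
  rewrite !mult_IZR in Hc; unfold zfact in Hc; rewrite <- !INR_IZR_INZ in Hc.
  rewrite mult_IZR, <- pow_IZR, <- Hc; field; apply INR_fact_neq_0.
Qed.

Local Close Scope R_scope.

Local Open Scope Z_scope.

(** * The operator [S^y] at [x = -1] *)

Definition neg1_sub (k : nat) : padic := zp_sub (zp_const (-1)) (zp_const (Z.of_nat k)).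

Lemma isZp_neg1_sub p k : isZp p (neg1_sub k).
Proof. apply isZp_sub; apply isZp_const. Qed.

(* Since [(-1)^k k! binom(-1,k) = k!], the [k]-th term at [x = -1] is [y^(k) phi(-1-k)]. *)
Lemma S_term_neg1 phi y k n :
  S_term phi y (zp_const (-1)) k n = zfalling (y (n + k)%nat) k * phi (neg1_sub k) n.
Proof.
  unfold S_term, zp_mul, zp_const, zp_binom; rewrite zbinom_neg1, <- zbinom_spec.
  transitivity ((-1) ^ Z.of_nat k * (-1) ^ Z.of_nat k * (zfact k * zbinom (y (n + k)%nat) k)
                * phi (neg1_sub k) n); [unfold neg1_sub, zp_const; ring | rewrite neg1_pow_sq; ring].
Qed.

Lemma S_op_to_neg1 p phi y : prime p -> zp_continuous p phi -> isZp p y ->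
  S_op_to p phi y (zp_const (-1))
    (fun n => zp_sum (S_term phi y (zp_const (-1))) (Z.to_nat p * n) n).
Proof.
  intros Hp Hc Hy; pose proof (prime_ge_2 p Hp).
  apply zp_series_to_partial; [| |intros; lia].
  - intros k n; rewrite !S_term_neg1; apply cong_mul.
    + apply zfalling_cong, (cong_weaken (p ^ Z.of_nat (n + k))); [apply pow_divide_le; lia|].
      apply isZp_cong_le; [exact Hy | lia].
    + apply (proj1 (Hc _ (isZp_neg1_sub p k))).
  - intros n k Hk; rewrite S_term_neg1, <- zbinom_spec.
    apply Z.divide_mul_l, Z.divide_mul_l, pow_divide_zfact; [lia | exact Hk].
Qed.

Lemma zp_continuous_common_modulus p phi n (xs : list padic) :
  zp_continuous p phi -> List.Forall (isZp p) xs ->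
  exists m, forall x, In x xs -> forall y, isZp p y -> zp_eqm p m x y -> zp_eqm p n (phi x) (phi y).
Proof.
  intros Hc; induction 1 as [|x xs Hx Hxs [m Hm]]; [exists 0%nat; intros ? []|].
  destruct (proj2 (Hc x Hx) n) as [m' Hm'].
  exists (Nat.max m m'); intros x' [<-|Hin] y Hy Hxy.
  - apply Hm'; [exact Hy|]; eapply zp_eqm_le; [exact Hx | exact Hy | apply Nat.le_max_r | exact Hxy].
  - apply Hm; [exact Hin | exact Hy|].
    rewrite List.Forall_forall in Hxs.
    eapply zp_eqm_le; [apply Hxs, Hin | exact Hy | apply Nat.le_max_l | exact Hxy].
Qed.

Lemma exists_neg1_mod_pow p N K : 1 < p ->
  exists X : nat, (K <= X)%nat /\ (p ^ Z.of_nat N | Z.of_nat X + 1).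
Proof.
  intros Hp; exists (Z.to_nat (p ^ Z.of_nat (N + K)) - 1)%nat.
  pose proof (Z.pow_gt_lin_r p (Z.of_nat K) Hp ltac:(lia)).
  pose proof (Z.pow_le_mono_r p (Z.of_nat K) (Z.of_nat (N + K)) ltac:(lia) ltac:(lia)).
  split; [lia|].
  replace (Z.of_nat (Z.to_nat (p ^ Z.of_nat (N + K)) - 1) + 1) with (p ^ Z.of_nat (N + K)) by lia.
  apply pow_divide_le; lia.
Qed.

Section PadicPart.

Variables (r : Q) (p : Z) (rinv : padic) (phi : padic -> padic).
Hypotheses (hr : ~ (r == 0)%Q) (Hp : prime p) (Hrinv : isZp p rinv)
  (Hrq : zp_of_rat p rinv (/ r)%Q) (Hc : zp_continuous p phi)
  (Hphi : forall n, zp_of_rat p (phi (zp_const (Z.of_nat n))) (phi_coef r n)).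

Definition phi_seq (n j : nat) : Z := phi (zp_const (Z.of_nat j)) n.

Lemma isZp_phi x : isZp p x -> isZp p (phi x).
Proof. intros Hx; exact (proj1 (Hc x Hx)). Qed.

Lemma phi_seq_succ_cong n j :
  (p ^ Z.of_nat n | phi_seq n (S j) - S_seq (rinv n - 1) (phi_seq n) j).
Proof.
  set (t := fun k => zp_mul (zp_mul (zp_const ((-1) ^ Z.of_nat k * zbinom (Z.of_nat j) k))
                                    (zp_falling (zp_sub rinv (zp_const 1)) k))
                            (phi (zp_const (Z.of_nat (j - k))))).
  assert (HV : zp_eq p (phi (zp_const (Z.of_nat (S j)))) (zp_sum t (S j))).
  { eapply zp_of_rat_unique;
      [exact Hp | apply isZp_phi, isZp_const | | apply Hphi | | apply phi_coef_succ, hr].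
    - apply isZp_sum; intros k _.
      apply isZp_mul; [apply isZp_mul|]; [apply isZp_const | apply isZp_falling, isZp_sub, isZp_const
                                         | apply isZp_phi, isZp_const]; exact Hrinv.
    - apply zp_of_rat_sum; intros k _.
      apply zp_of_rat_mul; [apply zp_of_rat_mul|]; [apply zp_of_rat_const | | apply Hphi].
      apply zp_of_rat_falling, zp_of_rat_sub, zp_of_rat_const; exact Hrq. }
  specialize (HV n); unfold zp_eqm in HV; rewrite zp_sum_at in HV.
  unfold S_seq; erewrite zsum_ext; [exact HV|].
  intros k _; unfold t, phi_seq, zp_mul, zp_const, zp_falling, zp_sub; ring.
Qed.

Lemma phi_seq_0_cong n : (p ^ Z.of_nat n | phi (zp_const 0) n - 1).
Proof.
  apply (zp_of_rat_unique p _ (zp_const 1) (phi_coef r 0) 1);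
    [exact Hp | apply isZp_phi, isZp_const | apply isZp_const | apply Hphi
    | apply zp_of_rat_const | reflexivity].
Qed.

(* Where [X = -1 (mod p^m)] and [m] is a modulus of continuity at the points
   [-1-k], the partial sums of [S^y(phi)(-1)] agree with [S_seq (y n)] at [X]. *)
Lemma S_partial_sum_neg1_cong n m X y :
  (forall k, (k < Z.to_nat p * n)%nat -> forall y', isZp p y' ->
     zp_eqm p m (neg1_sub k) y' -> zp_eqm p n (phi (neg1_sub k)) (phi y')) ->
  (Z.to_nat p * n <= X)%nat -> (p ^ Z.of_nat m | Z.of_nat X + 1) -> (p ^ Z.of_nat n | Z.of_nat X + 1) ->
  isZp p y ->
  (p ^ Z.of_nat n | zp_sum (S_term phi y (zp_const (-1))) (Z.to_nat p * n) n
                    - S_seq (y n) (phi_seq n) X).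
Proof.
  intros Hm HKX HXm HXn Hy; pose proof (prime_ge_2 p Hp).
  rewrite zp_sum_at.
  apply cong_trans with (zsum (fun k => zfalling (y n) k * phi_seq n (X - k)%nat) (Z.to_nat p * n)).
  - apply zsum_cong; intros k Hk; rewrite S_term_neg1; apply cong_mul.
    + apply zfalling_cong, isZp_cong_le; [exact Hy | lia].
    + apply (Hm k Hk); [apply isZp_const|].
      unfold zp_eqm, neg1_sub, zp_sub, zp_const.
      replace (-1 - Z.of_nat k - Z.of_nat (X - k)) with (- (Z.of_nat X + 1)) by lia.
      apply Z.divide_opp_r, HXm.
  - apply cong_sym, S_seq_trunc; [intros k Hk; apply pow_divide_zfact; lia | exact HKX | exact HXn].
Qed.

Lemma padic_functional_equation s : isZp p s ->
  exists L1 L2 : padic,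
    S_op_to p phi (zp_sub (zp_add s rinv) (zp_const 1)) (zp_const (-1)) L1 /\
    S_op_to p phi (zp_sub s (zp_const 1)) (zp_const (-1)) L2 /\
    zp_eq p L1 (zp_add (zp_const 1) (zp_mul s L2)).
Proof.
  intros Hs; pose proof (prime_ge_2 p Hp).
  set (y1 := zp_sub (zp_add s rinv) (zp_const 1)); set (y2 := zp_sub s (zp_const 1)).
  assert (Hy1 : isZp p y1) by (apply isZp_sub, isZp_const; apply isZp_add; assumption).
  assert (Hy2 : isZp p y2) by (apply isZp_sub, isZp_const; assumption).
  eexists; eexists; split; [apply S_op_to_neg1; eauto|]; split; [apply S_op_to_neg1; eauto|].
  intros n; unfold zp_eqm, zp_add, zp_mul, zp_const at 1.
  set (K := (Z.to_nat p * n)%nat); set (psi := phi_seq n).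
  destruct (zp_continuous_common_modulus p phi n (zp_const 0 :: map neg1_sub (seq 0 K)) Hc)
    as [m Hm].
  { constructor; [apply isZp_const|]; apply List.Forall_forall; intros x Hx.
    apply in_map_iff in Hx as [k [<- _]]; apply isZp_neg1_sub. }
  destruct (exists_neg1_mod_pow p (Nat.max m n) K) as [X [HKX HX]]; [lia|].
  assert (HXm : (p ^ Z.of_nat m | Z.of_nat X + 1))
    by (eapply Z.divide_trans; [apply pow_divide_le, Nat.le_max_l | exact HX]).
  assert (HXn : (p ^ Z.of_nat n | Z.of_nat X + 1))
    by (eapply Z.divide_trans; [apply pow_divide_le, Nat.le_max_r | exact HX]).
  assert (Hmod : forall k, (k < K)%nat -> forall y', isZp p y' ->
            zp_eqm p m (neg1_sub k) y' -> zp_eqm p n (phi (neg1_sub k)) (phi y')).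
  { intros k Hk; apply Hm; right; apply in_map, in_seq; lia. }
  assert (HL1 := S_partial_sum_neg1_cong n m X y1 Hmod HKX HXm HXn Hy1).
  assert (HL2 := S_partial_sum_neg1_cong n m X y2 Hmod HKX HXm HXn Hy2).
  assert (Hend : (p ^ Z.of_nat n | S_seq (s n) psi (S X) - 1)).
  { apply cong_trans with (psi (S X)).
    { apply S_seq_multiple; rewrite Nat2Z.inj_succ, <- Z.add_1_r; exact HXn. }
    apply cong_trans with (phi (zp_const 0) n); [|apply phi_seq_0_cong].
    apply cong_sym, (Hm (zp_const 0) (or_introl eq_refl)); [apply isZp_const|].
    unfold zp_eqm, zp_const; rewrite Nat2Z.inj_succ, Z.sub_0_l.
    apply Z.divide_opp_r; rewrite <- Z.add_1_r; exact HXm. }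
  unfold y1, y2, zp_sub, zp_add, zp_const in HL1, HL2.
  apply cong_trans with (S_seq (s n + (rinv n - 1)) psi X);
    [rewrite Z.add_sub_assoc; exact HL1|].
  apply cong_trans with (S_seq (s n) psi (S X) + s n * S_seq (s n - 1) psi X);
    [apply S_seq_recurrence_cong, phi_seq_succ_cong|].
  apply cong_add; [exact Hend|]; apply cong_mul; [apply cong_refl | apply cong_sym, HL2].
Qed.

End PadicPart.

(** * The archimedean integral *)

Local Open Scope R_scope.

Lemma is_RInt_gen_m_infty_of_lim {V : NormedModule R_AbsRing} (f F : R -> V) (l : V) :
  (forall a, a < 0 -> is_RInt f a 0 (F a)) ->
  filterlim F (Rbar_locally m_infty) (locally l) ->
  is_RInt_gen f (Rbar_locally m_infty) (at_point 0) l.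
Proof.
  intros HI Hl P HP.
  apply Filter_prod with (fun a => a < 0 /\ P (F a)) (fun b => b = 0).
  - apply filter_and; [exists 0; auto | apply Hl, HP].
  - reflexivity.
  - intros a b [Ha HPa] ->; exists (F a); split; [apply HI, Ha | exact HPa].
Qed.

Lemma is_RInt_RInt_0 (f : R -> R) a :
  a <= 0 -> (forall x, x <= 0 -> continuous f x) -> is_RInt f a 0 (RInt f a 0).
Proof.
  intros Ha Hf; apply (RInt_correct (V := R_CompleteNormedModule)).
  apply (ex_RInt_continuous (V := R_CompleteNormedModule)); intros z Hz; apply Hf.
  rewrite Rmax_right in Hz by exact Ha; lra.
Qed.

Lemma RInt_m_infty_cvg_of_dominated (f k K : R -> R) :
  (forall x, x <= 0 -> continuous f x) -> (forall x, x <= 0 -> continuous k x) ->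
  (forall x, x <= 0 -> Rabs (f x) <= k x) -> (forall x, x <= 0 -> is_derive K x (k x)) ->
  (forall eps, 0 < eps -> exists M, forall x, x < M -> Rabs (K x) < eps) ->
  exists l, filterlim (fun a => RInt f a 0) (Rbar_locally m_infty) (locally l).
Proof.
  intros Hf Hk Hb HK HKl.
  assert (Hex : forall u v, u <= 0 -> v <= 0 -> ex_RInt f u v).
  { intros u v Hu Hv; apply (ex_RInt_continuous (V := R_CompleteNormedModule)); intros z Hz; apply Hf.
    pose proof (Rmax_lub u v 0 Hu Hv); lra. }
  assert (Hmain : forall u v, u <= v -> v <= 0 -> Rabs (RInt f u v) <= K v - K u).
  { intros u v Huv Hv.
    assert (HIk : is_RInt k u v (K v - K u)).
    { apply (is_RInt_derive K k); intros x Hx; rewrite Rmax_right in Hx by exact Huv;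
        [apply HK | apply Hk]; lra. }
    eapply Rle_trans; [apply abs_RInt_le; [exact Huv | apply Hex; lra]|].
    rewrite <- (is_RInt_unique _ _ _ _ HIk); apply RInt_le; [exact Huv | | eexists; exact HIk |].
    - apply (ex_RInt_continuous (V := R_CompleteNormedModule)); intros z Hz.
      rewrite Rmax_right in Hz by exact Huv; apply continuous_comp; [apply Hf; lra | apply continuous_Rabs].
    - intros x Hx; apply Hb; lra. }
  apply (filterlim_locally_cauchy (F := Rbar_locally m_infty)); intros eps.
  destruct (HKl (eps / 2)) as [M HM]; [pose proof (cond_pos eps); lra|].
  exists (fun a => a < Rmin M 0); split; [exists (Rmin M 0); auto|].
  intros u v Hu Hv; pose proof (Rmin_l M 0); pose proof (Rmin_r M 0).
  change (Rabs (RInt f v 0 - RInt f u 0) < eps).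
  assert (HC := RInt_Chasles f u v 0 (Hex u v ltac:(lra) ltac:(lra)) (Hex v 0 ltac:(lra) ltac:(lra))).
  change (RInt f u v + RInt f v 0 = RInt f u 0) in HC.
  rewrite <- HC; replace (RInt f v 0 - (RInt f u v + RInt f v 0)) with (- RInt f u v) by ring.
  rewrite Rabs_Ropp.
  pose proof (HM u ltac:(lra)) as HMu; pose proof (HM v ltac:(lra)) as HMv.
  apply Rabs_def2 in HMu; apply Rabs_def2 in HMv.
  destruct (Rle_dec u v) as [Huv|Hvu].
  - pose proof (Hmain u v Huv ltac:(lra)); lra.
  - rewrite <- (opp_RInt_swap f v u (Hex v u ltac:(lra) ltac:(lra))), Rabs_Ropp.
    pose proof (Hmain v u ltac:(lra) ltac:(lra)); lra.
Qed.

Lemma is_RInt_C_of_re_im (f : R -> C) (fr fi : R -> R) a b lr li :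
  (forall x, f x = (fr x, fi x)) -> is_RInt fr a b lr -> is_RInt fi a b li ->
  @is_RInt C_R_NormedModule f a b (lr, li).
Proof.
  intros Hf H1 H2.
  apply (@is_RInt_ext C_R_NormedModule (fun x => (fr x, fi x))); [intros; rewrite Hf; reflexivity|].
  apply (@is_RInt_fct_extend_pair R_NormedModule R_NormedModule (fun x => (fr x, fi x))); assumption.
Qed.

Lemma filterlim_C_of_re_im (F1 F2 : R -> R) (l1 l2 : R) :
  is_lim F1 m_infty l1 -> is_lim F2 m_infty l2 ->
  filterlim (fun a => (F1 a, F2 a) : C) (Rbar_locally m_infty) (@locally C_R_NormedModule (l1, l2)).
Proof.
  intros H1 H2; apply filterlim_locally; intros eps.
  apply filterlim_locally with (eps := eps) in H1; apply filterlim_locally with (eps := eps) in H2.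
  generalize (filter_and _ _ H1 H2); apply filter_imp; intros x [Hx1 Hx2]; split; assumption.
Qed.

Lemma is_RInt_of_derive_sub (G h g : R -> R) a l : a <= 0 ->
  (forall x, a <= x <= 0 -> is_derive G x (h x - g x)) ->
  (forall x, a <= x <= 0 -> continuous h x) -> (forall x, a <= x <= 0 -> continuous g x) ->
  is_RInt g a 0 l -> is_RInt h a 0 (G 0 - G a + l).
Proof.
  intros Ha HG Hh Hg Hl.
  assert (HI : is_RInt (fun x => h x - g x) a 0 (G 0 - G a)).
  { apply (is_RInt_derive G); intros x Hx; rewrite Rmin_left, Rmax_right in Hx by exact Ha;
      [apply HG, Hx | apply (continuous_minus h g); [apply Hh | apply Hg]; exact Hx]. }
  apply (is_RInt_ext (fun x => plus (h x - g x) (g x))); [intros x _; change (h x - g x + g x = h x); ring|].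
  exact (is_RInt_plus _ _ _ _ _ _ HI Hl).
Qed.

Definition log1m (x : R) : R := ln (1 - x).

Definition weight (rho x : R) : R := exp (- rho * (exp (/ rho * log1m x) - 1)).

(* Real and imaginary parts of [(1-x)^sigma * weight] at [sigma = al + i be]. *)
Definition integrand_re (rho al be x : R) : R := exp (al * log1m x) * cos (be * log1m x) * weight rho x.
Definition integrand_im (rho al be x : R) : R := exp (al * log1m x) * sin (be * log1m x) * weight rho x.

Lemma Phi_inf_integrand_re_im rho al be x :
  Phi_inf_integrand rho (al, be) x = (integrand_re rho al be x, integrand_im rho al be x).
Proof.
  unfold Phi_inf_integrand, Cexp, integrand_re, integrand_im, weight, log1m, Rpower, Cmult, RtoC; simpl.
  f_equal; ring_simplify (al * ln (1 - x) - be * 0); ring_simplify (al * 0 + be * ln (1 - x)); ring.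
Qed.

Lemma integrand_re_0 rho al be : integrand_re rho al be 0 = 1.
Proof.
  unfold integrand_re, weight, log1m; rewrite Rminus_0_r, ln_1, !Rmult_0_r, exp_0, cos_0, Rminus_diag.
  rewrite Rmult_0_r, exp_0; ring.
Qed.

Lemma integrand_im_0 rho al be : integrand_im rho al be 0 = 0.
Proof. unfold integrand_im, log1m; rewrite Rminus_0_r, ln_1, !Rmult_0_r, sin_0; ring. Qed.

Lemma integrand_re_continuous rho al be x : x < 1 -> continuous (integrand_re rho al be) x.
Proof.
  intros Hx; apply (ex_derive_continuous (integrand_re rho al be)).
  unfold integrand_re, weight, log1m; auto_derive; lra.
Qed.

Lemma integrand_im_continuous rho al be x : x < 1 -> continuous (integrand_im rho al be) x.
Proof.
  intros Hx; apply (ex_derive_continuous (integrand_im rho al be)).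
  unfold integrand_im, weight, log1m; auto_derive; lra.
Qed.

Lemma exp_pred_mul_log1m al x : x < 1 -> exp ((al - 1) * log1m x) = exp (al * log1m x) / (1 - x).
Proof.
  intros Hx; replace ((al - 1) * log1m x) with (al * log1m x + - log1m x) by ring.
  unfold log1m; rewrite exp_plus, exp_Ropp, exp_ln by lra; field; lra.
Qed.

Lemma exp_mul_log1m_add al be x : x < 1 ->
  exp ((al + be - 1) * log1m x) = exp (al * log1m x) * exp (be * log1m x) / (1 - x).
Proof.
  intros Hx; unfold log1m; replace ((al + be - 1) * ln (1 - x))
    with (al * ln (1 - x) + be * ln (1 - x) + - ln (1 - x)) by ring.
  rewrite !exp_plus, exp_Ropp, exp_ln by lra; field; lra.
Qed.

(* [d/dx ((1-x)^s weight) = (1-x)^(s + 1/r - 1) weight - s (1-x)^(s-1) weight], in real and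
   imaginary parts. *)
Lemma integrand_re_derive rho a0 b0 x : rho <> 0 -> x < 1 ->
  is_derive (integrand_re rho a0 b0) x
    (integrand_re rho (a0 + / rho - 1) b0 x
     - (a0 * integrand_re rho (a0 - 1) b0 x - b0 * integrand_im rho (a0 - 1) b0 x)).
Proof.
  intros Hr Hx; unfold integrand_re, integrand_im.
  rewrite exp_mul_log1m_add by exact Hx.
  rewrite exp_pred_mul_log1m by exact Hx.
  unfold weight, log1m; auto_derive; [lra|].
  unfold Rminus; field; lra.
Qed.

Lemma integrand_im_derive rho a0 b0 x : rho <> 0 -> x < 1 ->
  is_derive (integrand_im rho a0 b0) x
    (integrand_im rho (a0 + / rho - 1) b0 x
     - (a0 * integrand_im rho (a0 - 1) b0 x + b0 * integrand_re rho (a0 - 1) b0 x)).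
Proof.
  intros Hr Hx; unfold integrand_re, integrand_im.
  rewrite exp_mul_log1m_add by exact Hx.
  rewrite exp_pred_mul_log1m by exact Hx.
  unfold weight, log1m; auto_derive; [lra|].
  unfold Rminus; field; lra.
Qed.

Lemma exp_le x y : x <= y -> exp x <= exp y.
Proof. intros [H | ->]; [left; apply exp_increasing, H | right; reflexivity]. Qed.

Lemma exp_pow x N : exp x ^ N = exp (INR N * x).
Proof.
  induction N as [|N IH]; [simpl; rewrite Rmult_0_l, exp_0; reflexivity|].
  rewrite S_INR, Rmult_plus_distr_r, Rmult_1_l, exp_plus, <- IH; simpl; ring.
Qed.

Lemma pow_div_le_exp t N : 0 <= t -> (0 < N)%nat -> (t / INR N) ^ N <= exp t.
Proof.
  intros Ht HN; assert (0 < INR N) by (apply lt_0_INR, HN).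
  replace t with (INR N * (t / INR N)) at 2 by (field; lra); rewrite <- exp_pow.
  apply pow_incr; split; [apply Rdiv_le_0_compat; lra|].
  pose proof (exp_ineq1_le (t / INR N)); lra.
Qed.

Lemma log1m_nonneg x : x <= 0 -> 0 <= log1m x.
Proof. intros Hx; unfold log1m; rewrite <- ln_1; apply ln_le; lra. Qed.

(* For [r > 0] the weight decays like [exp (- r (1-x)^(1/r))], faster than any power of [1-x];
   a single power [N > r a0] suffices, via [u^N <= N^N e^u]. *)
Lemma exp_log1m_weight_bound_pos rho a0 : 0 < rho ->
  exists C d, 0 < C /\ d < 0 /\
    forall x, x <= 0 -> exp (a0 * log1m x) * weight rho x <= C * exp (d * log1m x).
Proof.
  intros Hr.
  destruct (archimed (Rabs (rho * a0))) as [Hup _].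
  set (N := S (Z.to_nat (up (Rabs (rho * a0))))).
  assert (HN : rho * a0 < INR N).
  { unfold N; rewrite S_INR, INR_IZR_INZ, Z2Nat.id; [pose proof (Rle_abs (rho * a0)); lra|].
    apply le_IZR; pose proof (Rabs_pos (rho * a0)); lra. }
  assert (HN0 : 0 < INR N) by (apply lt_0_INR; unfold N; lia).
  assert (HP : 0 < (rho / INR N) ^ N) by (apply pow_lt, Rdiv_lt_0_compat; lra).
  exists (exp rho / (rho / INR N) ^ N), (a0 - INR N / rho); split.
  { apply Rdiv_lt_0_compat; [apply exp_pos | exact HP]. }
  split.
  { assert (rho * (INR N / rho) = INR N) by (field; lra); nra. }
  intros x Hx; set (L := log1m x); set (w := exp (/ rho * L)).
  assert (Hw : 1 <= w).
  { rewrite <- exp_0; apply exp_le, Rmult_le_pos;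
      [left; apply Rinv_0_lt_compat, Hr | apply log1m_nonneg, Hx]. }
  assert (HwN : 0 < w ^ N) by (apply pow_lt; lra).
  assert (Hweight : weight rho x = exp rho / exp (rho * w)).
  { unfold weight; fold L w; replace (- rho * (w - 1)) with (rho + - (rho * w)) by ring.
    rewrite exp_plus, exp_Ropp; reflexivity. }
  assert (Hd : exp ((a0 - INR N / rho) * L) = exp (a0 * L) / w ^ N).
  { unfold w; rewrite exp_pow.
    replace ((a0 - INR N / rho) * L) with (a0 * L + - (INR N * (/ rho * L))) by (field; lra).
    rewrite exp_plus, exp_Ropp; reflexivity. }
  assert (Hexp : (rho / INR N) ^ N * w ^ N <= exp (rho * w)).
  { rewrite <- Rpow_mult_distr; replace (rho / INR N * w) with (rho * w / INR N) by (field; lra).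
    apply pow_div_le_exp; [nra | unfold N; lia]. }
  rewrite Hweight, Hd.
  pose proof (exp_pos (a0 * L)); pose proof (exp_pos rho); pose proof (exp_pos (rho * w)).
  replace (exp (a0 * L) * (exp rho / exp (rho * w)))
    with (exp (a0 * L) * exp rho * / exp (rho * w)) by (unfold Rdiv; ring).
  replace (exp rho / (rho / INR N) ^ N * (exp (a0 * L) / w ^ N))
    with (exp (a0 * L) * exp rho * / ((rho / INR N) ^ N * w ^ N)) by (field; lra).
  apply Rmult_le_compat_l; [nra|].
  apply Rinv_le_contravar; [nra | exact Hexp].
Qed.

Lemma exp_log1m_weight_bound rho a0 : 0 < rho \/ (rho < 0 /\ a0 < 0) ->
  exists C d, 0 < C /\ d < 0 /\
    forall x, x <= 0 -> exp (a0 * log1m x) * weight rho x <= C * exp (d * log1m x).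
Proof.
  intros [Hr | [Hr Ha]]; [apply exp_log1m_weight_bound_pos, Hr|].
  exists 1, a0; repeat split; [lra | exact Ha|]; intros x Hx.
  pose proof (log1m_nonneg x Hx); pose proof (exp_pos (a0 * log1m x)).
  assert (Hinv : / rho < 0) by (apply Rinv_lt_0_compat, Hr).
  assert (Hw : exp (/ rho * log1m x) <= 1) by (rewrite <- exp_0; apply exp_le; nra).
  assert (weight rho x <= 1)
    by (unfold weight; apply (Rle_trans _ (exp 0)); [apply exp_le; nra | rewrite exp_0; lra]).
  nra.
Qed.

Lemma exp_mul_log1m_small d : d < 0 ->
  forall eps, 0 < eps -> exists M, forall x, x < M -> exp (d * log1m x) < eps.
Proof.
  intros Hd eps He; exists (Rmin 0 (1 - exp (ln eps / d))); intros x Hx.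
  pose proof (Rmin_l 0 (1 - exp (ln eps / d))); pose proof (Rmin_r 0 (1 - exp (ln eps / d))).
  assert (H1 : ln eps / d < log1m x).
  { unfold log1m; rewrite <- (ln_exp (ln eps / d)); apply ln_increasing; [apply exp_pos | lra]. }
  rewrite <- (exp_ln eps) by exact He; apply exp_increasing.
  replace (ln eps) with (d * (ln eps / d)) by (field; lra); nra.
Qed.

Lemma filterlim_m_infty_0_of_log1m_bound (G : R -> R) C d : 0 < C -> d < 0 ->
  (forall x, x <= 0 -> Rabs (G x) <= C * exp (d * log1m x)) ->
  filterlim G (Rbar_locally m_infty) (locally 0).
Proof.
  intros HC Hd HG; apply filterlim_locally; intros eps.
  destruct (exp_mul_log1m_small d Hd (eps / C)) as [M HM].
  { apply Rdiv_lt_0_compat; [apply cond_pos | exact HC]. }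
  exists (Rmin M 0); intros x Hx; pose proof (Rmin_l M 0); pose proof (Rmin_r M 0).
  change (Rabs (G x - 0) < eps); rewrite Rminus_0_r.
  eapply Rle_lt_trans; [apply HG; lra|].
  specialize (HM x ltac:(lra)); apply (Rmult_lt_compat_l C) in HM; [|exact HC].
  replace (C * (eps / C)) with (pos eps) in HM by (field; lra); exact HM.
Qed.

(* [-(C/d) (1-x)^d] is a primitive of the dominating function [C (1-x)^(d-1)]. *)
Lemma RInt_cvg_of_log1m_bound (f : R -> R) C d : 0 < C -> d < 0 ->
  (forall x, x <= 0 -> continuous f x) ->
  (forall x, x <= 0 -> Rabs (f x) <= C * exp ((d - 1) * log1m x)) ->
  exists l, filterlim (fun a => RInt f a 0) (Rbar_locally m_infty) (locally l).
Proof.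
  intros HC Hd Hf Hb.
  apply (RInt_m_infty_cvg_of_dominated f (fun x => C * exp ((d - 1) * log1m x))
           (fun x => - (C / d) * exp (d * log1m x))); [exact Hf | | exact Hb | |].
  - intros x Hx; apply (ex_derive_continuous (fun x => C * exp ((d - 1) * log1m x))).
    unfold log1m; auto_derive; lra.
  - intros x Hx; unfold log1m; auto_derive; [lra|].
    replace (1 + - x) with (1 - x) by ring; change (ln (1 - x)) with (log1m x).
    rewrite exp_pred_mul_log1m by lra; field; lra.
  - intros eps He.
    destruct (exp_mul_log1m_small d Hd (eps * (- d) / C)) as [M HM]; [apply Rdiv_lt_0_compat; nra|].
    exists M; intros x Hx; specialize (HM x Hx).
    rewrite Rabs_mult, Rabs_Ropp, (Rabs_pos_eq (exp _)) by (left; apply exp_pos).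
    rewrite Rabs_div, (Rabs_pos_eq C), (Rabs_left d) by lra.
    apply (Rmult_lt_compat_l (C / - d)) in HM; [|apply Rdiv_lt_0_compat; lra].
    replace (C / - d * (eps * - d / C)) with eps in HM by (field; lra); lra.
Qed.

Lemma Rabs_mul_bounded_le A t g : 0 <= A -> 0 <= g -> Rabs t <= 1 -> Rabs (A * t * g) <= A * g.
Proof.
  intros HA Hg Ht; rewrite !Rabs_mult, (Rabs_pos_eq A), (Rabs_pos_eq g) by assumption.
  rewrite <- (Rmult_1_r A) at 2; apply Rmult_le_compat_r; [exact Hg|].
  apply Rmult_le_compat_l; assumption.
Qed.

Lemma integrand_re_abs_le rho al be x :
  Rabs (integrand_re rho al be x) <= exp (al * log1m x) * weight rho x.
Proof. apply Rabs_mul_bounded_le; [left; apply exp_pos | left; apply exp_pos | apply Rabs_le, COS_bound]. Qed.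

Lemma integrand_im_abs_le rho al be x :
  Rabs (integrand_im rho al be x) <= exp (al * log1m x) * weight rho x.
Proof. apply Rabs_mul_bounded_le; [left; apply exp_pos | left; apply exp_pos | apply Rabs_le, SIN_bound]. Qed.

Lemma exp_pred_log1m_weight_le rho a0 C d x : x <= 0 ->
  exp (a0 * log1m x) * weight rho x <= C * exp (d * log1m x) ->
  exp ((a0 - 1) * log1m x) * weight rho x <= C * exp ((d - 1) * log1m x).
Proof.
  intros Hx H; rewrite !exp_pred_mul_log1m by lra.
  replace (exp (a0 * log1m x) / (1 - x) * weight rho x) with (exp (a0 * log1m x) * weight rho x / (1 - x))
    by (unfold Rdiv; ring).
  replace (C * (exp (d * log1m x) / (1 - x))) with (C * exp (d * log1m x) / (1 - x)) by (unfold Rdiv; ring).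
  apply Rmult_le_compat_r; [left; apply Rinv_0_lt_compat; lra | exact H].
Qed.

Lemma is_RInt_integrand_shift_re rho a0 b0 a Fr Fi : rho <> 0 -> a <= 0 ->
  is_RInt (integrand_re rho (a0 - 1) b0) a 0 Fr -> is_RInt (integrand_im rho (a0 - 1) b0) a 0 Fi ->
  is_RInt (integrand_re rho (a0 + / rho - 1) b0) a 0
    (1 - integrand_re rho a0 b0 a + (a0 * Fr - b0 * Fi)).
Proof.
  intros Hr Ha HFr HFi.
  replace (1 - integrand_re rho a0 b0 a)
    with (integrand_re rho a0 b0 0 - integrand_re rho a0 b0 a) by (rewrite integrand_re_0; reflexivity).
  apply (is_RInt_of_derive_sub (integrand_re rho a0 b0) _
           (fun x => a0 * integrand_re rho (a0 - 1) b0 x - b0 * integrand_im rho (a0 - 1) b0 x));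
    [exact Ha | intros; apply integrand_re_derive; lra | intros; apply integrand_re_continuous; lra | |].
  - intros x Hx; apply (ex_derive_continuous (fun x => a0 * integrand_re rho (a0 - 1) b0 x
                                                       - b0 * integrand_im rho (a0 - 1) b0 x)).
    unfold integrand_re, integrand_im, weight, log1m; auto_derive; lra.
  - apply (is_RInt_minus (V := R_NormedModule)); apply (is_RInt_scal (V := R_NormedModule)); assumption.
Qed.

Lemma is_RInt_integrand_shift_im rho a0 b0 a Fr Fi : rho <> 0 -> a <= 0 ->
  is_RInt (integrand_re rho (a0 - 1) b0) a 0 Fr -> is_RInt (integrand_im rho (a0 - 1) b0) a 0 Fi ->
  is_RInt (integrand_im rho (a0 + / rho - 1) b0) a 0
    (0 - integrand_im rho a0 b0 a + (a0 * Fi + b0 * Fr)).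
Proof.
  intros Hr Ha HFr HFi.
  replace (0 - integrand_im rho a0 b0 a)
    with (integrand_im rho a0 b0 0 - integrand_im rho a0 b0 a) by (rewrite integrand_im_0; reflexivity).
  apply (is_RInt_of_derive_sub (integrand_im rho a0 b0) _
           (fun x => a0 * integrand_im rho (a0 - 1) b0 x + b0 * integrand_re rho (a0 - 1) b0 x));
    [exact Ha | intros; apply integrand_im_derive; lra | intros; apply integrand_im_continuous; lra | |].
  - intros x Hx; apply (ex_derive_continuous (fun x => a0 * integrand_im rho (a0 - 1) b0 x
                                                       + b0 * integrand_re rho (a0 - 1) b0 x)).
    unfold integrand_re, integrand_im, weight, log1m; auto_derive; lra.
  - apply (is_RInt_plus (V := R_NormedModule)); apply (is_RInt_scal (V := R_NormedModule)); assumption.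
Qed.

Lemma archimedean_functional_equation rho (s : C) : rho <> 0 ->
  0 < rho \/ (rho < 0 /\ Re s < 0) ->
  exists l1 l2 : C,
    Phi_inf_is rho (s + RtoC (/ rho) - 1)%C l1 /\ Phi_inf_is rho (s - 1)%C l2 /\ l1 = (1 + s * l2)%C.
Proof.
  intros Hr Hcase; destruct s as [a0 b0]; simpl Re in Hcase.
  destruct (exp_log1m_weight_bound rho a0 Hcase) as [Cb [d [HC [Hd Hb]]]].
  set (fr := integrand_re rho (a0 - 1) b0); set (fi := integrand_im rho (a0 - 1) b0).
  assert (Hfr : forall x, x <= 0 -> continuous fr x) by (intros; apply integrand_re_continuous; lra).
  assert (Hfi : forall x, x <= 0 -> continuous fi x) by (intros; apply integrand_im_continuous; lra).
  destruct (RInt_cvg_of_log1m_bound fr Cb d HC Hd Hfr) as [lr Hlr].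
  { intros x Hx; eapply Rle_trans;
      [apply integrand_re_abs_le | apply exp_pred_log1m_weight_le, Hb; exact Hx]. }
  destruct (RInt_cvg_of_log1m_bound fi Cb d HC Hd Hfi) as [li Hli].
  { intros x Hx; eapply Rle_trans;
      [apply integrand_im_abs_le | apply exp_pred_log1m_weight_le, Hb; exact Hx]. }
  exists (1 + (a0, b0) * (lr, li))%C, (lr, li).
  replace ((a0, b0) - 1)%C with ((a0 - 1, b0) : C)
    by (unfold Cminus, Cplus, Copp, RtoC; simpl; f_equal; ring).
  replace ((a0, b0) + RtoC (/ rho) - 1)%C with ((a0 + / rho - 1, b0) : C)
    by (unfold Cminus, Cplus, Copp, RtoC; simpl; f_equal; ring).
  split; [|split; [|reflexivity]].
  - apply (is_RInt_gen_m_infty_of_lim (V := C_R_NormedModule) _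
      (fun a => (1 - integrand_re rho a0 b0 a + (a0 * RInt fr a 0 - b0 * RInt fi a 0),
                 0 - integrand_im rho a0 b0 a + (a0 * RInt fi a 0 + b0 * RInt fr a 0)) : C)).
    + intros a Ha; apply is_RInt_C_of_re_im
        with (integrand_re rho (a0 + / rho - 1) b0) (integrand_im rho (a0 + / rho - 1) b0);
        [intros; apply Phi_inf_integrand_re_im
        | apply is_RInt_integrand_shift_re | apply is_RInt_integrand_shift_im];
        try apply is_RInt_RInt_0; auto; lra.
    + replace (1 + (a0, b0) * (lr, li))%C
        with ((1 - 0 + (a0 * lr - b0 * li), 0 - 0 + (a0 * li + b0 * lr)) : C)
        by (unfold Cplus, Cmult, RtoC; simpl; f_equal; ring).
      assert (Hre0 := filterlim_m_infty_0_of_log1m_bound (integrand_re rho a0 b0) Cb d HC Hd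
                        (fun x Hx => Rle_trans _ _ _ (integrand_re_abs_le rho a0 b0 x) (Hb x Hx))).
      assert (Him0 := filterlim_m_infty_0_of_log1m_bound (integrand_im rho a0 b0) Cb d HC Hd
                        (fun x Hx => Rle_trans _ _ _ (integrand_im_abs_le rho a0 b0 x) (Hb x Hx))).
      apply filterlim_C_of_re_im; apply is_lim_plus';
        try (apply is_lim_minus'; [apply is_lim_const | assumption]).
      * apply is_lim_minus'; [apply (is_lim_scal_l _ a0 m_infty lr) | apply (is_lim_scal_l _ b0 m_infty li)];
          assumption.
      * apply is_lim_plus'; [apply (is_lim_scal_l _ a0 m_infty li) | apply (is_lim_scal_l _ b0 m_infty lr)];
          assumption.
  - apply (is_RInt_gen_m_infty_of_lim (V := C_R_NormedModule) _ (fun a => (RInt fr a 0, RInt fi a 0) : C)).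
    + intros a Ha; apply is_RInt_C_of_re_im with fr fi;
        [intros; apply Phi_inf_integrand_re_im | apply is_RInt_RInt_0 ..]; auto; lra.
    + apply filterlim_C_of_re_im; assumption.
Qed.

Theorem lemma9p3 (r : Q) (hr : ~ (r == 0)%Q) :
  (forall (p : Z), prime p ->
     ~ (p | Qnum (Qred r))%Z -> ~ (p | Zpos (Qden (Qred r)))%Z ->
     forall rinv : padic, isZp p rinv -> zp_of_rat p rinv (/ r)%Q ->
     forall phi : padic -> padic,
       zp_continuous p phi ->
       (forall n : nat, zp_of_rat p (phi (zp_const (Z.of_nat n))) (phi_coef r n)) ->
     forall s : padic, isZp p s ->
       exists L1 L2 : padic,
         S_op_to p phi (zp_sub (zp_add s rinv) (zp_const 1%Z)) (zp_const (-1)%Z) L1 /\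
         S_op_to p phi (zp_sub s (zp_const 1%Z)) (zp_const (-1)%Z) L2 /\
         zp_eq p L1 (zp_add (zp_const 1%Z) (zp_mul s L2)))
  /\
  (forall s : C,
     (0 < Q2R r)%R \/ ((Q2R r < 0)%R /\ (Re s < 0)%R) ->
     exists l1 l2 : C,
       Phi_inf_is (Q2R r) (s + RtoC (/ Q2R r) - 1)%C l1 /\
       Phi_inf_is (Q2R r) (s - 1)%C l2 /\
       l1 = (1 + s * l2)%C).
Proof.
  split.
  - intros p Hp _ _ rinv Hrinv Hrq phi Hc Hphi.
    exact (padic_functional_equation r p rinv phi hr Hp Hrinv Hrq Hc Hphi).
  - intros s; apply archimedean_functional_equation, Q2R_neq_0, hr.
Qed.
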